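(* Let $G$ be a connected graph and let $r\le r'$ be natural numbers. Let $q_{r,r'}:G_r\to G_{r'}$ be a covering with $p_r=p_{r'}\circ q_{r,r'}$, and let $p_{r,r'}:(G_{r'})_r\to G_{r'}$ be the $r$-local covering of $G_{r'}$. Then $p_{r,r'}$ and $q_{r,r'}$ are equivalent coverings of $G_{r'}$, and $p_r$ and $p_{r'}\circ p_{r,r'}$ are equivalent coverings of $G$. In particular, $(G_{r'})_r$ and $G_r$ are isomorphic graphs.
   Context: Graphs may have loops and parallel edges and are viewed as 1-complexes; covering spaces are connected. A cycle may be a loop or a pair of parallel edges; a closed walk once around a cycle $O$ traverses every edge of $O$ exactly once. For a connected graph $X$, a vertex $x_0$ and $s\in\mathbb{N}$, $\pi_1^s(X,x_0)$ is the subgroup of $\pi_1(X,x_0)$ generated by the classes of closed walks $W_0QW_0^-$, $W_0$ a walk from $x_0$ to a vertex $y$, $Q$ a closed walk at $y$ once around a cycle of length at most $s$, $W_0^-$ the reverse of $W_0$. The $s$-local covering $p_s:X_s\to X$ is the connected normal covering with characteristic subgroup $\pi_1^s(X,x_0)$. (A covering $q_{r,r'}$ as in the claim exists, and is unique up to equivalence.) Two coverings $q:X\to Y$, $q':X'\to Y$ are equivalent if there is a homeomorphism $h:X\to X'$ with $q'\circ h=q$. *)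

(* Graphs as 1-complexes are encoded
   combinatorially by darts (oriented edges) with a fixed-point-free
   reversal involution; this allows loops and parallel edges, and
   arbitrary (possibly infinite) vertex/dart types. *)
From Stdlib Require Import List Relations.
Import ListNotations.
Set Implicit Arguments.

Record graph := Graph {
  V : Type;
  D : Type;
  tail : D -> V;
  drev : D -> D;
  drev_invol : forall d, drev (drev d) = d;
  drev_nofix : forall d, drev d <> d }.

Arguments tail {g} _.
Arguments drev {g} _.

Definition head {G : graph} (d : D G) : V G := tail (drev d).

Fixpoint is_walk {G : graph} (x : V G) (l : list (D G)) : Prop :=
  match l with
  | nil => True
  | d :: l' => tail d = x /\ is_walk (head d) l'
  end.

Fixpoint wend {G : graph} (x : V G) (l : list (D G)) : V G :=
  match l with
  | nil => x
  | d :: l' => wend (head d) l'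
  end.

Definition closed_walk {G : graph} (x : V G) (l : list (D G)) : Prop :=
  is_walk x l /\ wend x l = x.

Definition rev_walk {G : graph} (l : list (D G)) : list (D G) :=
  List.rev (map drev l).

Inductive red1 {G : graph} : list (D G) -> list (D G) -> Prop :=
  | red1_intro : forall l1 l2 d, red1 (l1 ++ d :: drev d :: l2) (l1 ++ l2).

Definition homotopic {G : graph} : list (D G) -> list (D G) -> Prop :=
  clos_refl_sym_trans _ red1.

(* Q is a closed walk at y once around a cycle: nonempty, closed, visiting
   pairwise distinct vertices and traversing pairwise distinct edges
   (a loop for length 1, a pair of parallel edges for length 2). *)
Definition cycle_walk {G : graph} (y : V G) (Q : list (D G)) : Prop :=
  Q <> nil /\ closed_walk y Q /\ NoDup (map tail Q) /\
  (forall l1 d l2 d' l3, Q = l1 ++ d :: l2 ++ d' :: l3 ->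
      d' <> d /\ d' <> drev d).

Definition pi1_gen {G : graph} (s : nat) (x0 : V G) (l : list (D G)) : Prop :=
  exists (W0 Q : list (D G)),
    is_walk x0 W0 /\ cycle_walk (wend x0 W0) Q /\ length Q <= s /\
    l = W0 ++ Q ++ rev_walk W0.

Inductive in_gen {G : graph} (P : list (D G) -> Prop) : list (D G) -> Prop :=
  | gen_nil : in_gen P nil
  | gen_base : forall l, P l -> in_gen P l
  | gen_app : forall l1 l2, in_gen P l1 -> in_gen P l2 -> in_gen P (l1 ++ l2)
  | gen_inv : forall l, in_gen P l -> in_gen P (rev_walk l).

(* The class of the closed walk W at x0 lies in pi_1^s(G, x0). *)
Definition in_pi1s {G : graph} (s : nat) (x0 : V G) (W : list (D G)) : Prop :=
  exists W', in_gen (pi1_gen s x0) W' /\ homotopic W W'.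

Record gmor (X Y : graph) := GMor {
  fv : V X -> V Y;
  fd : D X -> D Y;
  fd_tail : forall d, tail (fd d) = fv (tail d);
  fd_rev : forall d, fd (drev d) = drev (fd d) }.

Arguments fv {X Y} _ _.
Arguments fd {X Y} _ _.

Definition gcomp {X Y Z : graph} (g : gmor Y Z) (f : gmor X Y) : gmor X Z.
Proof.
  refine (@GMor X Z (fun v => fv g (fv f v)) (fun d => fd g (fd f d)) _ _).
  - intro d. rewrite fd_tail, fd_tail. reflexivity.
  - intro d. rewrite fd_rev, fd_rev. reflexivity.
Defined.

Definition connected (G : graph) : Prop :=
  inhabited (V G) /\
  forall x y : V G, exists l, is_walk x l /\ wend x l = y.

Definition is_covering {X Y : graph} (f : gmor X Y) : Prop :=
  connected X /\
  (forall y : V Y, exists x, fv f x = y) /\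
  (forall (x : V X) (e : D Y), tail e = fv f x ->
      exists! d : D X, tail d = x /\ fd f d = e).

(* The characteristic subgroup f_*(pi_1(X, x0)) equals pi_1^s(Y, f x0):
   a closed walk at f x0 lifts to a closed walk at x0 iff its class lies in
   pi_1^s(Y, f x0). *)
Definition char_subgroup_is_pi1s {X Y : graph} (s : nat) (f : gmor X Y)
    (x0 : V X) : Prop :=
  forall W : list (D Y), closed_walk (fv f x0) W ->
    ((exists Wt, closed_walk x0 Wt /\ map (fd f) Wt = W) <-> in_pi1s s (fv f x0) W).

Definition is_local_covering {X Y : graph} (s : nat) (p : gmor X Y) : Prop :=
  is_covering p /\ exists x0 : V X, char_subgroup_is_pi1s s p x0.

Definition is_iso {X Y : graph} (h : gmor X Y) : Prop :=
  exists hi : gmor Y X,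
    (forall v, fv hi (fv h v) = v) /\ (forall v, fv h (fv hi v) = v) /\
    (forall d, fd hi (fd h d) = d) /\ (forall d, fd h (fd hi d) = d).

Definition graph_iso (X Y : graph) : Prop := exists h : gmor X Y, is_iso h.

Definition equiv_cov {X X' Y : graph} (q : gmor X Y) (q' : gmor X' Y) : Prop :=
  exists h : gmor X X', is_iso h /\
    (forall v, fv q' (fv h v) = fv q v) /\ (forall d, fd q' (fd h d) = fd q d).

(* Coverings of a connected graph are classified by the closed walks at a base vertex that lift
   to closed walks: if two coverings have the same such walks, transporting vertices along
   lifted walks (the monodromy action on the fibres) is an isomorphism over the base.
   Closed walks W of G_{r'} lift closed along q_{r,r'} iff p_{r'}(W) lifts closed along p_r,
   i.e. iff p_{r'}(W) is in pi_1^r(G), and they lift closed along p_{r,r'} iff W is in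
   pi_1^r(G_{r'}).  These agree: the image of a cycle of length <= r is a closed walk of length
   <= r, hence a product of conjugates of such cycles; conversely, since r <= r', every
   generator of pi_1^r(G) lifts along p_{r'} to a closed walk, which is again a generator of
   pi_1^r(G_{r'}). *)

From Stdlib Require Import List Relations Wf_nat Lia Classical ClassicalEpsilon.
Import ListNotations.

Lemma head_drev {G : graph} (d : D G) : head (drev d) = tail d.
Proof. unfold head; rewrite drev_invol; reflexivity. Qed.

Lemma wend_app {G : graph} (x : V G) l1 l2 : wend x (l1 ++ l2) = wend (wend x l1) l2.
Proof. revert x; induction l1; simpl; auto. Qed.

Lemma is_walk_app {G : graph} (x : V G) l1 l2 :
  is_walk x (l1 ++ l2) <-> is_walk x l1 /\ is_walk (wend x l1) l2.
Proof. revert x; induction l1 as [|d l1 IH]; intro x; simpl; [tauto | rewrite IH; tauto]. Qed.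

Lemma rev_walk_app {G : graph} (l1 l2 : list (D G)) :
  rev_walk (l1 ++ l2) = rev_walk l2 ++ rev_walk l1.
Proof. unfold rev_walk; rewrite map_app, rev_app_distr; reflexivity. Qed.

Lemma rev_walk_cons {G : graph} (d : D G) l : rev_walk (d :: l) = rev_walk l ++ [drev d].
Proof. reflexivity. Qed.

Lemma rev_walk_involutive {G : graph} (l : list (D G)) : rev_walk (rev_walk l) = l.
Proof.
  unfold rev_walk; rewrite map_rev, rev_involutive, map_map.
  erewrite map_ext; [apply map_id | intro; apply drev_invol].
Qed.

Lemma is_walk_rev_walk {G : graph} (x : V G) l :
  is_walk x l -> is_walk (wend x l) (rev_walk l) /\ wend (wend x l) (rev_walk l) = x.
Proof.
  revert x; induction l as [|d l IH]; intros x Hl; simpl in *; auto.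
  destruct Hl as [Hd Hl]; destruct (IH _ Hl) as [Hw He].
  rewrite rev_walk_cons, is_walk_app, wend_app, He; simpl.
  rewrite head_drev; unfold head; auto.
Qed.

Lemma head_fd {X Y} (f : gmor X Y) d : head (fd f d) = fv f (head d).
Proof. unfold head; rewrite <- fd_rev, fd_tail; reflexivity. Qed.

Lemma fv_wend {X Y} (f : gmor X Y) x l : fv f (wend x l) = wend (fv f x) (map (fd f) l).
Proof. revert x; induction l; simpl; auto. intro; rewrite IHl, head_fd; reflexivity. Qed.

Lemma is_walk_map {X Y} (f : gmor X Y) x l : is_walk x l -> is_walk (fv f x) (map (fd f) l).
Proof.
  revert x; induction l as [|d l IH]; simpl; auto. intros x [Hd Hl].
  rewrite fd_tail, Hd, head_fd; auto.
Qed.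

Lemma closed_walk_map {X Y} (f : gmor X Y) x l :
  closed_walk x l -> closed_walk (fv f x) (map (fd f) l).
Proof.
  intros [Hw He]; split; [apply is_walk_map; exact Hw | rewrite <- fv_wend, He; reflexivity].
Qed.

Lemma map_rev_walk {X Y} (f : gmor X Y) l :
  map (fd f) (rev_walk l) = rev_walk (map (fd f) l).
Proof.
  unfold rev_walk; rewrite map_rev, !map_map; f_equal; apply map_ext; intro; apply fd_rev.
Qed.

Lemma closed_walk_conj {G : graph} (x : V G) U W :
  is_walk x U -> closed_walk (wend x U) W -> closed_walk x (U ++ W ++ rev_walk U).
Proof.
  intros HU [HW HWe]; destruct (is_walk_rev_walk _ _ HU) as [HR HRe].
  split; [rewrite !is_walk_app, HWe | rewrite !wend_app, HWe]; auto.
Qed.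

Lemma homotopic_compat {X Y : graph} (F : list (D X) -> list (D Y)) :
  (forall a b, red1 a b -> homotopic (F a) (F b)) ->
  forall a b, homotopic a b -> homotopic (F a) (F b).
Proof.
  intro HF; induction 1; [apply HF; auto | apply rst_refl | apply rst_sym; auto | eapply rst_trans; eauto].
Qed.

Lemma homotopic_context {G : graph} (u v a b : list (D G)) :
  homotopic a b -> homotopic (u ++ a ++ v) (u ++ b ++ v).
Proof.
  apply (homotopic_compat (fun l => u ++ l ++ v)); intros _ _ [l1 l2 d]; apply rst_step.
  replace (u ++ (l1 ++ d :: drev d :: l2) ++ v) with ((u ++ l1) ++ d :: drev d :: l2 ++ v)
    by (rewrite <- !app_assoc; reflexivity).
  replace (u ++ (l1 ++ l2) ++ v) with ((u ++ l1) ++ l2 ++ v) by (rewrite <- !app_assoc; reflexivity).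
  constructor.
Qed.

Lemma homotopic_app {G : graph} (a a' b b' : list (D G)) :
  homotopic a a' -> homotopic b b' -> homotopic (a ++ b) (a' ++ b').
Proof.
  intros Ha Hb; eapply rst_trans.
  - exact (homotopic_context [] b _ _ Ha).
  - pose proof (homotopic_context a' [] _ _ Hb) as H; rewrite !app_nil_r in H; exact H.
Qed.

Lemma homotopic_cancel {G : graph} (l : list (D G)) : homotopic (l ++ rev_walk l) [].
Proof.
  induction l as [|d l IH]; [apply rst_refl|].
  rewrite rev_walk_cons.
  replace ((d :: l) ++ rev_walk l ++ [drev d]) with ([d] ++ (l ++ rev_walk l) ++ [drev d])
    by (simpl; rewrite app_assoc; reflexivity).
  eapply rst_trans; [apply homotopic_context, IH|].
  apply rst_step, (red1_intro [] [] d).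
Qed.

Lemma homotopic_cancel_rev {G : graph} (l : list (D G)) : homotopic (rev_walk l ++ l) [].
Proof.
  pose proof (homotopic_cancel (rev_walk l)) as H; rewrite rev_walk_involutive in H; exact H.
Qed.

Lemma homotopic_map {X Y} (f : gmor X Y) a b :
  homotopic a b -> homotopic (map (fd f) a) (map (fd f) b).
Proof.
  apply (homotopic_compat (map (fd f))); intros _ _ [l1 l2 d]; apply rst_step.
  rewrite !map_app; simpl; rewrite fd_rev; constructor.
Qed.

Lemma homotopic_rev_walk {G : graph} (a b : list (D G)) :
  homotopic a b -> homotopic (rev_walk a) (rev_walk b).
Proof.
  apply (homotopic_compat rev_walk); intros _ _ [l1 l2 d]; apply rst_step.
  rewrite !rev_walk_app, !rev_walk_cons, drev_invol, <- !app_assoc; constructor.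
Qed.

Definition unique_lifting {X Y} (f : gmor X Y) : Prop :=
  forall x e, tail e = fv f x -> exists! d, tail d = x /\ fd f d = e.

Lemma covering_unique_lifting {X Y} (f : gmor X Y) : is_covering f -> unique_lifting f.
Proof. intros [_ [_ H]]; exact H. Qed.

Lemma unique_lifting_comp {X Y Z} (g : gmor Y Z) (f : gmor X Y) :
  unique_lifting g -> unique_lifting f -> unique_lifting (gcomp g f).
Proof.
  intros Ug Uf x e He; simpl in He.
  destruct (Ug _ e He) as [e1 [[He1 Ee1] Ue1]].
  destruct (Uf x e1 He1) as [d [[Hd Ed] Ud]].
  exists d; split; [simpl; split; congruence|].
  intros d' [Hd' Ed']; apply Ud; split; auto; symmetry.
  apply Ue1; split; auto; rewrite fd_tail; congruence.
Qed.

Lemma dart_lift_unique {X Y} (f : gmor X Y) :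
  unique_lifting f -> forall d1 d2, tail d1 = tail d2 -> fd f d1 = fd f d2 -> d1 = d2.
Proof.
  intros U d1 d2 Ht He; destruct (U (tail d1) (fd f d1) (fd_tail f d1)) as [d0 [_ Ud0]].
  rewrite <- (Ud0 d1), <- (Ud0 d2); auto.
Qed.

Lemma walk_lift_exists {X Y} (f : gmor X Y) : unique_lifting f ->
  forall W x, is_walk (fv f x) W -> exists Wt, is_walk x Wt /\ map (fd f) Wt = W.
Proof.
  intros U W; induction W as [|e W IH]; intros x HW; [exists []; simpl; auto|].
  destruct HW as [He HW]; destruct (U x e He) as [d [[Hd Ed] _]].
  rewrite <- Ed, head_fd in HW; destruct (IH _ HW) as [Wt [HWt EWt]].
  exists (d :: Wt); simpl; rewrite EWt, Ed; auto.
Qed.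

Lemma walk_lift_unique {X Y} (f : gmor X Y) : unique_lifting f ->
  forall Wt1 Wt2 x, is_walk x Wt1 -> is_walk x Wt2 -> map (fd f) Wt1 = map (fd f) Wt2 -> Wt1 = Wt2.
Proof.
  intros U Wt1; induction Wt1 as [|d1 l1 IH]; intros [|d2 l2] x H1 H2 E; simpl in *;
    try discriminate; auto.
  injection E as Ed E; destruct H1 as [Ht1 H1], H2 as [Ht2 H2].
  assert (d1 = d2) by (apply (dart_lift_unique f U); congruence); subst d2.
  f_equal; eauto.
Qed.

Definition lifts_closed {X Y} (f : gmor X Y) (x : V X) (W : list (D Y)) : Prop :=
  exists Wt, closed_walk x Wt /\ map (fd f) Wt = W.

(* The three cases make each step a permutation of [V X] undone by [drev e], so [monodromy] is
   invariant under homotopy even through lists of darts that are not walks. *)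
Definition moves_along {X Y} (f : gmor X Y) (e : D Y) (x y : V X) : Prop :=
  (fv f x = tail e /\ exists d, tail d = x /\ fd f d = e /\ head d = y) \/
  (fv f x <> tail e /\ fv f x = head e /\ exists d, head d = x /\ fd f d = e /\ tail d = y) \/
  (fv f x <> tail e /\ fv f x <> head e /\ y = x).

Definition monodromy_step {X Y} (f : gmor X Y) (e : D Y) (x : V X) : V X :=
  epsilon (inhabits x) (moves_along f e x).

Definition monodromy {X Y} (f : gmor X Y) (l : list (D Y)) (x : V X) : V X :=
  fold_left (fun x e => monodromy_step f e x) l x.

Section Monodromy.
Context {X Y : graph} (f : gmor X Y) (f_lifting : unique_lifting f).

Lemma moves_along_total e x : exists y, moves_along f e x y.
Proof.
  destruct (classic (fv f x = tail e)) as [Et|Et].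
  - destruct (f_lifting x e (eq_sym Et)) as [d [[Hd Ed] _]].
    exists (head d); left; split; eauto.
  - destruct (classic (fv f x = head e)) as [Eh|Eh].
    + destruct (f_lifting x (drev e) (eq_sym Eh)) as [d [[Hd Ed] _]].
      exists (head d); right; left; repeat split; auto.
      exists (drev d); rewrite head_drev, fd_rev, Ed, drev_invol; auto.
    + exists x; right; right; auto.
Qed.

Lemma moves_along_functional e x y y' : moves_along f e x y -> moves_along f e x y' -> y = y'.
Proof.
  intros [[Et [d [Hd [Ed Eyd]]]]|[[Et [Eh [d [Hd [Ed Eyd]]]]]|[Et [Eh Ey]]]]
    [[Et' [d' [Hd' [Ed' Eyd']]]]|[[Et' [Eh' [d' [Hd' [Ed' Eyd']]]]]|[Et' [Eh' Ey']]]];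
    try contradiction; try congruence.
  - assert (d = d') by (apply (dart_lift_unique f f_lifting); congruence); congruence.
  - assert (drev d = drev d') as E.
    { apply (dart_lift_unique f f_lifting); [unfold head in *; congruence | rewrite !fd_rev; congruence]. }
    rewrite <- Eyd, <- Eyd', <- (drev_invol _ d), <- (drev_invol _ d'), E; reflexivity.
Qed.

Lemma monodromy_step_eq e x y : moves_along f e x y -> monodromy_step f e x = y.
Proof.
  intro Hy; apply (moves_along_functional e x); auto.
  unfold monodromy_step; apply epsilon_spec; eauto.
Qed.

Lemma monodromy_step_drev e x : monodromy_step f (drev e) (monodromy_step f e x) = x.
Proof.
  assert (Hy : moves_along f e x (monodromy_step f e x))
    by (unfold monodromy_step; apply epsilon_spec, moves_along_total).
  apply monodromy_step_eq; set (y := monodromy_step f e x) in *; clearbody y.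
  destruct Hy as [[Et [d [Hd [Ed Ey]]]]|[[Et [Eh [d [Hd [Ed Ey]]]]]|[Et [Eh Ey]]]].
  - left; split.
    + rewrite <- Ey, <- head_fd, Ed; reflexivity.
    + exists (drev d); rewrite fd_rev, Ed, head_drev; unfold head in Ey; auto.
  - right; left; rewrite <- Ey, <- fd_tail, Ed; split; [|split].
    + intro C; apply Et; rewrite Eh; unfold head; symmetry; exact C.
    + rewrite head_drev; reflexivity.
    + exists (drev d); rewrite head_drev, fd_rev, Ed; unfold head in Hd; auto.
  - right; right; subst y; rewrite head_drev; auto.
Qed.

Lemma monodromy_app l1 l2 x : monodromy f (l1 ++ l2) x = monodromy f l2 (monodromy f l1 x).
Proof. apply fold_left_app. Qed.

Lemma monodromy_homotopic l l' : homotopic l l' -> forall x, monodromy f l x = monodromy f l' x.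
Proof.
  induction 1 as [a b [l1 l2 d]| | |]; intro x0; auto; [|congruence].
  change (d :: drev d :: l2) with ([d; drev d] ++ l2); rewrite !monodromy_app.
  f_equal; apply monodromy_step_drev.
Qed.

Lemma monodromy_lift Wt x : is_walk x Wt -> monodromy f (map (fd f) Wt) x = wend x Wt.
Proof.
  revert x; induction Wt as [|d l IH]; intros x Hw; simpl; auto.
  destruct Hw as [Hd Hl].
  rewrite (monodromy_step_eq (fd f d) x (head d)); [apply IH; exact Hl|].
  left; split; [rewrite fd_tail; congruence | eauto].
Qed.

Lemma monodromy_rev_walk l x : monodromy f (rev_walk l) (monodromy f l x) = x.
Proof. rewrite <- monodromy_app, (monodromy_homotopic _ _ (homotopic_cancel l)); reflexivity. Qed.

Lemma monodromy_rev_walk' l x : monodromy f l (monodromy f (rev_walk l) x) = x.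
Proof. rewrite <- monodromy_app, (monodromy_homotopic _ _ (homotopic_cancel_rev l)); reflexivity. Qed.

Lemma lifts_closed_monodromy x W :
  is_walk (fv f x) W -> lifts_closed f x W <-> monodromy f W x = x.
Proof.
  intro HW; split.
  - intros [Wt [[HWt E] <-]]; rewrite monodromy_lift; auto.
  - intro E; destruct (walk_lift_exists f f_lifting W x HW) as [Wt [HWt <-]].
    rewrite monodromy_lift in E by exact HWt; exists Wt; split; [split|]; auto.
Qed.

End Monodromy.

Lemma in_pi1s_homotopic {G : graph} s (x : V G) a b :
  homotopic a b -> in_pi1s s x b -> in_pi1s s x a.
Proof. intros H [l [Hl Hb]]; exists l; split; [exact Hl | eapply rst_trans; eauto]. Qed.

Lemma in_pi1s_in_gen {G : graph} s (x : V G) l : in_gen (pi1_gen s x) l -> in_pi1s s x l.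
Proof. intro H; exists l; split; [exact H | apply rst_refl]. Qed.

Lemma in_pi1s_nil {G : graph} s (x : V G) : in_pi1s s x [].
Proof. apply in_pi1s_in_gen, gen_nil. Qed.

Lemma in_pi1s_app {G : graph} s (x : V G) a b :
  in_pi1s s x a -> in_pi1s s x b -> in_pi1s s x (a ++ b).
Proof.
  intros [a' [Ha Ha']] [b' [Hb Hb']]; exists (a' ++ b').
  split; [apply gen_app | apply homotopic_app]; auto.
Qed.

Lemma in_pi1s_rev_walk {G : graph} s (x : V G) a : in_pi1s s x a -> in_pi1s s x (rev_walk a).
Proof.
  intros [a' [Ha Ha']]; exists (rev_walk a').
  split; [apply gen_inv | apply homotopic_rev_walk]; auto.
Qed.

Lemma in_pi1s_conj {G : graph} s (x : V G) U l :
  is_walk x U -> in_pi1s s (wend x U) l -> in_pi1s s x (U ++ l ++ rev_walk U).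
Proof.
  intros HU [l' [Hg Hh]]; apply in_pi1s_homotopic with (U ++ l' ++ rev_walk U);
    [apply homotopic_context, Hh|]; clear Hh l.
  induction Hg as [|l Hl|l1 l2 H1 IH1 H2 IH2|l H IH].
  - apply in_pi1s_homotopic with []; [apply homotopic_cancel | apply in_pi1s_nil].
  - apply in_pi1s_in_gen, gen_base.
    destruct Hl as [W0 [Q [HW0 [HQ [Hlen ->]]]]]; exists (U ++ W0), Q.
    rewrite is_walk_app, wend_app, rev_walk_app, <- !app_assoc; auto.
  - apply in_pi1s_homotopic with ((U ++ l1 ++ rev_walk U) ++ (U ++ l2 ++ rev_walk U));
      [|apply in_pi1s_app; auto].
    replace ((U ++ l1 ++ rev_walk U) ++ U ++ l2 ++ rev_walk U)
      with ((U ++ l1) ++ (rev_walk U ++ U) ++ (l2 ++ rev_walk U)) by (rewrite <- !app_assoc; reflexivity).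
    replace (U ++ (l1 ++ l2) ++ rev_walk U) with ((U ++ l1) ++ [] ++ (l2 ++ rev_walk U))
      by (simpl; rewrite <- !app_assoc; reflexivity).
    apply rst_sym, homotopic_context, homotopic_cancel_rev.
  - replace (U ++ rev_walk l ++ rev_walk U) with (rev_walk (U ++ l ++ rev_walk U))
      by (rewrite !rev_walk_app, rev_walk_involutive, app_assoc; reflexivity).
    apply in_pi1s_rev_walk, IH.
Qed.

Lemma in_pi1s_conj_iff {G : graph} s (x : V G) U l :
  is_walk x U -> in_pi1s s (wend x U) l <-> in_pi1s s x (U ++ l ++ rev_walk U).
Proof.
  intro HU; split; [apply in_pi1s_conj, HU|intro Hl].
  destruct (is_walk_rev_walk _ _ HU) as [HR HRe].
  pose proof (in_pi1s_conj s _ _ (U ++ l ++ rev_walk U) HR) as Hc; rewrite HRe, rev_walk_involutive in Hc.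
  apply in_pi1s_homotopic with (rev_walk U ++ (U ++ l ++ rev_walk U) ++ U); [|apply Hc, Hl].
  replace (rev_walk U ++ (U ++ l ++ rev_walk U) ++ U)
    with ((rev_walk U ++ U) ++ l ++ (rev_walk U ++ U)) by (rewrite <- !app_assoc; reflexivity).
  pose proof (homotopic_app _ _ _ _ (homotopic_cancel_rev U)
                (homotopic_app _ _ _ _ (rst_refl _ _ l) (homotopic_cancel_rev U))) as H.
  rewrite app_nil_r in H; apply rst_sym, H.
Qed.

Lemma pi1_gen_le {G : graph} s s' (x : V G) l : s <= s' -> pi1_gen s x l -> pi1_gen s' x l.
Proof. intros Hs [W0 [Q [HW0 [HQ [Hlen E]]]]]; exists W0, Q; split; [|split; [|split]]; auto; lia. Qed.

Lemma pi1_gen_closed_walk {G : graph} s (x : V G) l : pi1_gen s x l -> closed_walk x l.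
Proof. intros [W0 [Q [HW0 [[_ [HQ _]] [_ ->]]]]]; apply closed_walk_conj; auto. Qed.

Lemma not_NoDup_map_split {A B : Type} (f : A -> B) (l : list A) :
  ~ NoDup (map f l) -> exists l1 a l2 b l3, l = l1 ++ a :: l2 ++ b :: l3 /\ f a = f b.
Proof.
  induction l as [|x l IH]; intro H; [exfalso; apply H; constructor|].
  destruct (classic (In (f x) (map f l))) as [Hin|Hin].
  - apply in_map_iff in Hin; destruct Hin as [b [Hb Hbin]].
    destruct (in_split _ _ Hbin) as [l2 [l3 ->]]; exists [], x, l2, b, l3; auto.
  - destruct IH as [l1 [a [l2 [b [l3 [-> E]]]]]]; [intro C; apply H; constructor; auto|].
    exists (x :: l1), a, l2, b, l3; auto.
Qed.

Lemma NoDup_map_split_neq {A B : Type} (f : A -> B) l1 a l2 b l3 :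
  NoDup (map f (l1 ++ a :: l2 ++ b :: l3)) -> f a <> f b.
Proof.
  intros H E; rewrite map_app in H; simpl in H; apply NoDup_remove_2 in H; apply H.
  apply in_or_app; right; rewrite map_app; apply in_or_app; right; left; auto.
Qed.

Lemma NoDup_tail_backtrack {G : graph} (z : V G) l1 d l2 l3 :
  closed_walk z (l1 ++ d :: l2 ++ drev d :: l3) ->
  NoDup (map tail (l1 ++ d :: l2 ++ drev d :: l3)) -> l1 = [] /\ l2 = [] /\ l3 = [].
Proof.
  intros [Hwalk Hc] Hn; pose proof (proj2 (proj1 (is_walk_app _ _ _) Hwalk)) as [_ Hw].
  destruct l2 as [|e l2].
  - destruct l3 as [|e l3].
    + destruct l1 as [|e l1]; auto; exfalso.
      rewrite wend_app in Hc; simpl in Hc, Hwalk; rewrite head_drev in Hc.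
      apply (NoDup_map_split_neq tail [] e l1 d [drev d]); [exact Hn | destruct Hwalk; congruence].
    + exfalso; simpl in Hw; destruct Hw as [_ [Hw _]]; rewrite head_drev in Hw.
      apply (NoDup_map_split_neq tail l1 d [drev d] e l3 Hn); congruence.
  - exfalso; simpl in Hw; destruct Hw as [Hw _].
    apply (NoDup_map_split_neq tail (l1 ++ [d]) e l2 (drev d) l3);
      [rewrite <- app_assoc; exact Hn | rewrite Hw; reflexivity].
Qed.

Lemma closed_walk_NoDup_tail_cases {G : graph} (z : V G) Q :
  closed_walk z Q -> NoDup (map tail Q) ->
  Q = [] \/ cycle_walk z Q \/ exists d, Q = [d; drev d].
Proof.
  intros Hc Hn; destruct Q as [|d0 Q0]; [left; reflexivity | right].
  destruct (classic (forall l1 d l2 d' l3, d0 :: Q0 = l1 ++ d :: l2 ++ d' :: l3 ->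
                       d' <> d /\ d' <> drev d)) as [Hall|Hall].
  - left; split; [discriminate | auto].
  - right; apply NNPP; intro Hnot; apply Hall; intros l1 d l2 d' l3 E; rewrite E in Hc, Hn.
    split; intros ->.
    + apply (NoDup_map_split_neq tail l1 d l2 d l3 Hn); reflexivity.
    + destruct (NoDup_tail_backtrack z l1 d l2 l3 Hc Hn) as [-> [-> ->]].
      apply Hnot; exists d; exact E.
Qed.

Lemma short_closed_walk_in_pi1s {G : graph} s (Q : list (D G)) z :
  closed_walk z Q -> length Q <= s -> in_pi1s s z Q.
Proof.
  revert z; induction Q as [Q IH] using (induction_ltof1 _ (@length _)); intros z Hc Hs.
  destruct (classic (NoDup (map tail Q))) as [Hn|Hn].
  - destruct (closed_walk_NoDup_tail_cases z Q Hc Hn) as [->|[HQ|[d ->]]].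
    + apply in_pi1s_nil.
    + apply in_pi1s_in_gen, gen_base; exists [], Q; simpl; rewrite app_nil_r; auto.
    + apply in_pi1s_homotopic with []; [apply rst_step, (red1_intro [] [] d) | apply in_pi1s_nil].
  - destruct (not_NoDup_map_split tail Q Hn) as [A [d [B [d' [C [-> Ed]]]]]].
    destruct Hc as [Hw Hc]; rewrite !is_walk_app in Hw; simpl in Hw; rewrite is_walk_app in Hw.
    destruct Hw as [HA [Hd [HB [Hd' HC]]]].
    rewrite wend_app in Hc; simpl in Hc; rewrite wend_app in Hc; simpl in Hc.
    unfold ltof in IH; rewrite !length_app in IH, Hs; simpl in IH, Hs; rewrite length_app in IH, Hs.
    assert (Hloop : in_pi1s s (wend z A) (d :: B)).
    { apply IH; [simpl in *; lia | split; simpl; [auto | congruence] | simpl in *; lia]. }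
    assert (Hrest : in_pi1s s z (A ++ d' :: C)).
    { apply IH; [rewrite length_app; simpl in *; lia | | rewrite length_app; simpl in *; lia].
      split; [rewrite is_walk_app; simpl; split; [|split]; auto; congruence | rewrite wend_app; exact Hc]. }
    apply in_pi1s_homotopic with ((A ++ (d :: B) ++ rev_walk A) ++ (A ++ d' :: C));
      [|apply in_pi1s_app; [apply in_pi1s_conj|]; auto].
    replace ((A ++ (d :: B) ++ rev_walk A) ++ A ++ d' :: C)
      with ((A ++ d :: B) ++ (rev_walk A ++ A) ++ (d' :: C)) by (rewrite <- !app_assoc; reflexivity).
    replace (A ++ d :: B ++ d' :: C) with ((A ++ d :: B) ++ [] ++ (d' :: C))
      by (simpl; rewrite <- !app_assoc; reflexivity).
    apply rst_sym, homotopic_context, homotopic_cancel_rev.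
Qed.

Lemma in_pi1s_map {X Y} (f : gmor X Y) s x W :
  in_pi1s s x W -> in_pi1s s (fv f x) (map (fd f) W).
Proof.
  intros [l [Hg Hh]]; apply in_pi1s_homotopic with (map (fd f) l); [apply homotopic_map, Hh|].
  clear Hh W; induction Hg as [|l Hl|l1 l2 H1 IH1 H2 IH2|l H IH].
  - apply in_pi1s_nil.
  - destruct Hl as [W0 [Q [HW0 [[_ [HQ _]] [Hlen ->]]]]].
    rewrite !map_app, map_rev_walk; apply in_pi1s_conj; [apply is_walk_map, HW0|].
    rewrite <- fv_wend; apply short_closed_walk_in_pi1s; [apply closed_walk_map, HQ|].
    rewrite length_map; exact Hlen.
  - rewrite map_app; apply in_pi1s_app; auto.
  - rewrite map_rev_walk; apply in_pi1s_rev_walk, IH.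
Qed.

Lemma cycle_walk_of_map {X Y} (f : gmor X Y) y B :
  closed_walk y B -> cycle_walk (fv f y) (map (fd f) B) -> cycle_walk y B.
Proof.
  intros HB [Hne [_ [Hn Hdarts]]]; split; [|split; [exact HB|split]].
  - intros ->; apply Hne; reflexivity.
  - apply (NoDup_map_inv (fv f)); rewrite map_map.
    erewrite map_ext; [|intro; symmetry; apply fd_tail]; rewrite <- map_map; exact Hn.
  - intros l1 d l2 d' l3 ->.
    rewrite !map_app in Hdarts; simpl in Hdarts; rewrite map_app in Hdarts; simpl in Hdarts.
    destruct (Hdarts _ _ _ _ _ eq_refl) as [N1 N2].
    split; intros ->; [apply N1 | apply N2, fd_rev]; reflexivity.
Qed.

(* A closed walk whose image is a generator [W0 Q W0^-] is itself one: it splits as [A B C]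
   over [W0], [Q], [W0^-], and [C = A^-] by uniqueness of lifts at [y]. *)
Lemma pi1_gen_of_map {X Y} (f : gmor X Y) s y (g : list (D X)) :
  unique_lifting f -> closed_walk y g -> pi1_gen s (fv f y) (map (fd f) g) -> pi1_gen s y g.
Proof.
  intros U [Hw Hc] [W0 [Q [HW0 [HQ [Hlen Heq]]]]].
  apply map_eq_app in Heq as [A [g' [-> [MA Mg']]]].
  apply map_eq_app in Mg' as [B [C [-> [MB MC]]]].
  rewrite !is_walk_app in Hw; destruct Hw as [HA [HB HC]]; rewrite !wend_app in Hc.
  destruct (is_walk_rev_walk _ _ HC) as [HR HRe]; rewrite Hc in HR, HRe.
  assert (EC : rev_walk C = A).
  { apply (walk_lift_unique f U _ _ y); auto; rewrite map_rev_walk, MC, rev_walk_involutive; auto. }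
  rewrite EC in HRe.
  exists A, B; split; [exact HA | split; [|split]].
  - apply (cycle_walk_of_map f); [split; auto | rewrite <- MB, <- MA, <- fv_wend in HQ; exact HQ].
  - rewrite <- MB, length_map in Hlen; exact Hlen.
  - rewrite <- EC, rev_walk_involutive; reflexivity.
Qed.

Lemma monodromy_fixes_in_pi1s {X Y} (c : gmor X Y) s x :
  unique_lifting c -> (forall l, pi1_gen s (fv c x) l -> monodromy c l x = x) ->
  forall W, in_pi1s s (fv c x) W -> monodromy c W x = x.
Proof.
  intros U Hgen W [l [Hg Hh]]; rewrite (monodromy_homotopic c U _ _ Hh); clear Hh W.
  induction Hg as [|l Hl|l1 l2 H1 IH1 H2 IH2|l H IH]; auto.
  - rewrite monodromy_app, IH1, IH2; reflexivity.
  - rewrite <- IH at 1; apply monodromy_rev_walk, U.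
Qed.

(* As [r <= r'], each generator of [pi_1^r] downstairs lifts closed along [f], to a generator
   upstairs by [pi1_gen_of_map], which lifts closed along [p].  So the monodromy of [f o p]
   along [f W] fixes [z], and the closed lift of [f W] at [z] lies over [W]. *)
Lemma in_pi1s_of_map {Z X Y} (p : gmor Z X) (f : gmor X Y) r r' z W :
  r <= r' -> unique_lifting p -> unique_lifting f ->
  char_subgroup_is_pi1s r p z -> char_subgroup_is_pi1s r' f (fv p z) ->
  closed_walk (fv p z) W -> in_pi1s r (fv f (fv p z)) (map (fd f) W) -> in_pi1s r (fv p z) W.
Proof.
  intros Hr Up Uf Chp Chf HW HfW.
  pose proof (unique_lifting_comp f p Uf Up) as Uc.
  assert (Hgen : forall l, pi1_gen r (fv (gcomp f p) z) l -> monodromy (gcomp f p) l z = z).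
  { intros l Hl; pose proof (pi1_gen_closed_walk _ _ _ Hl) as Cl.
    destruct (proj2 (Chf l Cl) (in_pi1s_in_gen _ _ _ (gen_base _ _ (pi1_gen_le _ _ _ _ Hr Hl))))
      as [g [Cg <-]].
    assert (Hg : in_pi1s r (fv p z) g)
      by exact (in_pi1s_in_gen _ _ _ (gen_base _ _ (pi1_gen_of_map f r _ _ Uf Cg Hl))).
    destruct (proj2 (Chp g Cg) Hg) as [Zt [CZt <-]].
    apply lifts_closed_monodromy; [exact Uc | apply Cl|].
    exists Zt; split; [exact CZt | symmetry; apply map_map]. }
  pose proof (monodromy_fixes_in_pi1s _ _ _ Uc Hgen _ HfW) as Hfix.
  apply (lifts_closed_monodromy _ Uc) in Hfix; [|exact (is_walk_map f _ _ (proj1 HW))].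
  destruct Hfix as [Zt [CZt EZt]]; apply Chp; [exact HW|].
  exists Zt; split; [exact CZt|].
  apply (walk_lift_unique f Uf _ _ (fv p z));
    [apply is_walk_map, CZt | apply HW | rewrite map_map; exact EZt].
Qed.

Lemma lifts_closed_conj {X Y} (f : gmor X Y) x0 P W :
  unique_lifting f -> is_walk x0 P -> closed_walk (fv f (wend x0 P)) W ->
  lifts_closed f (wend x0 P) W <->
  lifts_closed f x0 (map (fd f) P ++ W ++ rev_walk (map (fd f) P)).
Proof.
  intros U HP HW.
  assert (HU : is_walk (fv f x0) (map (fd f) P)) by (apply is_walk_map, HP).
  assert (Hconj : closed_walk (fv f x0) (map (fd f) P ++ W ++ rev_walk (map (fd f) P)))
    by (apply closed_walk_conj; [exact HU | rewrite <- fv_wend; exact HW]).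
  rewrite (lifts_closed_monodromy f U _ _ (proj1 HW)),
    (lifts_closed_monodromy f U _ _ (proj1 Hconj)).
  rewrite !monodromy_app, (monodromy_lift f U P x0 HP).
  split; intro E.
  - rewrite E, <- (monodromy_lift f U P x0 HP); apply monodromy_rev_walk, U.
  - rewrite <- (monodromy_rev_walk' f U (map (fd f) P) (monodromy f W (wend x0 P))), E.
    apply monodromy_lift; auto.
Qed.

Lemma char_subgroup_is_pi1s_move {X Y} s (f : gmor X Y) x0 x1 :
  is_covering f -> char_subgroup_is_pi1s s f x0 -> char_subgroup_is_pi1s s f x1.
Proof.
  intros Hf Ch W HW; pose proof (covering_unique_lifting f Hf) as U.
  destruct (proj2 (proj1 Hf) x0 x1) as [P [HP <-]].
  assert (HU : is_walk (fv f x0) (map (fd f) P)) by (apply is_walk_map, HP).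
  assert (Hconj : closed_walk (fv f x0) (map (fd f) P ++ W ++ rev_walk (map (fd f) P)))
    by (apply closed_walk_conj; [exact HU | rewrite <- fv_wend; exact HW]).
  rewrite (lifts_closed_conj f x0 P W U HP HW), fv_wend, (in_pi1s_conj_iff _ _ _ _ HU).
  exact (Ch _ Hconj).
Qed.

Lemma lifts_closed_comp {X Y Z} (g : gmor Y Z) (f : gmor X Y) (h : gmor X Z) x W :
  unique_lifting g -> (forall d, fd h d = fd g (fd f d)) -> is_walk (fv f x) W ->
  lifts_closed f x W <-> lifts_closed h x (map (fd g) W).
Proof.
  intros Ug Eh HW; split; intros [Wt [CWt EWt]]; exists Wt; split; auto.
  - rewrite <- EWt, map_map; apply map_ext, Eh.
  - apply (walk_lift_unique g Ug _ _ (fv f x)); [apply is_walk_map, CWt | exact HW|].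
    rewrite map_map, <- EWt; apply map_ext; intro; symmetry; apply Eh.
Qed.

Section CoveringMorphism.
Context {X1 X2 Y : graph} (f1 : gmor X1 Y) (f2 : gmor X2 Y) (x1 : V X1) (x2 : V X2).
Hypothesis X1_walks : forall v, exists Wt, is_walk x1 Wt /\ wend x1 Wt = v.
Hypothesis f2_lifting : unique_lifting f2.
Hypothesis base_over : fv f1 x1 = fv f2 x2.
Hypothesis closed_lifts :
  forall W, closed_walk (fv f1 x1) W -> lifts_closed f1 x1 W -> lifts_closed f2 x2 W.

Definition path_from_base (v : V X1) : list (D X1) :=
  proj1_sig (constructive_indefinite_description _ (X1_walks v)).

Lemma path_from_base_spec v : is_walk x1 (path_from_base v) /\ wend x1 (path_from_base v) = v.
Proof. exact (proj2_sig (constructive_indefinite_description _ (X1_walks v))). Qed.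

Definition transfer (v : V X1) : V X2 := monodromy f2 (map (fd f1) (path_from_base v)) x2.

Lemma transfer_wend Wt : is_walk x1 Wt -> transfer (wend x1 Wt) = monodromy f2 (map (fd f1) Wt) x2.
Proof.
  intro HWt; unfold transfer; destruct (path_from_base_spec (wend x1 Wt)) as [HP HPe].
  set (P := path_from_base (wend x1 Wt)) in *; clearbody P.
  destruct (is_walk_rev_walk _ _ HP) as [HR HRe]; rewrite HPe in HR, HRe.
  assert (Hloop : closed_walk x1 (Wt ++ rev_walk P))
    by (split; [rewrite is_walk_app | rewrite wend_app]; auto).
  pose proof (closed_walk_map f1 _ _ Hloop) as Hdown; rewrite base_over in Hdown.
  pose proof (closed_lifts _ (closed_walk_map f1 _ _ Hloop) (ex_intro _ _ (conj Hloop eq_refl)))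
    as Hup.
  apply (lifts_closed_monodromy f2 f2_lifting _ _ (proj1 Hdown)) in Hup.
  rewrite map_app, monodromy_app, map_rev_walk in Hup.
  rewrite <- Hup at 1; apply monodromy_rev_walk', f2_lifting.
Qed.

Lemma transfer_wend_lift Wt Ut : is_walk x1 Wt -> is_walk x2 Ut ->
  map (fd f2) Ut = map (fd f1) Wt -> transfer (wend x1 Wt) = wend x2 Ut.
Proof. intros HWt HUt E; rewrite transfer_wend, <- E by exact HWt; apply monodromy_lift; auto. Qed.

Lemma walk_lift_at_base Wt :
  is_walk x1 Wt -> exists Ut, is_walk x2 Ut /\ map (fd f2) Ut = map (fd f1) Wt.
Proof.
  intro HWt; apply (walk_lift_exists f2 f2_lifting).
  rewrite <- base_over; apply is_walk_map, HWt.
Qed.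

Lemma transfer_base : transfer x1 = x2.
Proof. exact (transfer_wend [] I). Qed.

Lemma transfer_over v : fv f2 (transfer v) = fv f1 v.
Proof.
  destruct (X1_walks v) as [Wt [HWt <-]]; destruct (walk_lift_at_base Wt HWt) as [Ut [HUt E]].
  rewrite (transfer_wend_lift Wt Ut), !fv_wend, E, base_over by auto; reflexivity.
Qed.

Lemma transfer_dart_exists d : exists d2, tail d2 = transfer (tail d) /\ fd f2 d2 = fd f1 d.
Proof.
  destruct (f2_lifting (transfer (tail d)) (fd f1 d)) as [d2 [Hd2 _]]; [|exists d2; exact Hd2].
  rewrite fd_tail, transfer_over; reflexivity.
Qed.

Definition transfer_dart (d : D X1) : D X2 :=
  proj1_sig (constructive_indefinite_description _ (transfer_dart_exists d)).

Lemma transfer_dart_spec d :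
  tail (transfer_dart d) = transfer (tail d) /\ fd f2 (transfer_dart d) = fd f1 d.
Proof. exact (proj2_sig (constructive_indefinite_description _ (transfer_dart_exists d))). Qed.

Lemma transfer_dart_head d : head (transfer_dart d) = transfer (head d).
Proof.
  destruct (transfer_dart_spec d) as [Ht Hd].
  destruct (X1_walks (tail d)) as [Wt [HWt Ee]]; destruct (walk_lift_at_base Wt HWt) as [Ut [HUt E]].
  assert (Hte : tail (transfer_dart d) = wend x2 Ut)
    by (rewrite Ht, <- Ee; apply transfer_wend_lift; auto).
  pose proof (transfer_wend_lift (Wt ++ [d]) (Ut ++ [transfer_dart d])) as K.
  rewrite !wend_app in K; simpl in K; symmetry; apply K.
  - rewrite is_walk_app; simpl; rewrite Ee; auto.
  - rewrite is_walk_app; simpl; auto.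
  - rewrite !map_app, E; simpl; rewrite Hd; reflexivity.
Qed.

Lemma transfer_dart_drev d : transfer_dart (drev d) = drev (transfer_dart d).
Proof.
  apply (dart_lift_unique f2 f2_lifting).
  - rewrite (proj1 (transfer_dart_spec _)); exact (eq_sym (transfer_dart_head d)).
  - rewrite (proj2 (transfer_dart_spec _)), !fd_rev, (proj2 (transfer_dart_spec _)); reflexivity.
Qed.

Lemma covering_morphism_exists : exists h : gmor X1 X2,
  fv h x1 = x2 /\ (forall v, fv f2 (fv h v) = fv f1 v) /\ (forall d, fd f2 (fd h d) = fd f1 d).
Proof.
  exists (GMor X1 X2 transfer transfer_dart (fun d => proj1 (transfer_dart_spec d))
            transfer_dart_drev).
  split; [exact transfer_base | split; [exact transfer_over|]].
  exact (fun d => proj2 (transfer_dart_spec d)).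
Qed.

End CoveringMorphism.

Lemma deck_fixing_point_is_id {X Y} (f : gmor X Y) (h : gmor X X) x :
  connected X -> unique_lifting f -> (forall d, fd f (fd h d) = fd f d) -> fv h x = x ->
  (forall v, fv h v = v) /\ (forall d, fd h d = d).
Proof.
  intros [_ HX] U Hd Hx.
  assert (Hdart : forall d, fv h (tail d) = tail d -> fd h d = d)
    by (intros d Ht; apply (dart_lift_unique f U); [rewrite fd_tail | apply Hd]; exact Ht).
  assert (Hwalk : forall Wt y, is_walk y Wt -> fv h y = y -> fv h (wend y Wt) = wend y Wt).
  { induction Wt as [|d Wt IH]; intros y Hw Hy; [exact Hy|]; destruct Hw as [Ht Hw]; apply IH; auto.
    rewrite <- head_fd, Hdart; [reflexivity | congruence]. }
  assert (Hv : forall v, fv h v = v)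
    by (intro v; destruct (HX x v) as [Wt [HWt <-]]; apply Hwalk; auto).
  split; [exact Hv | intro d; apply Hdart, Hv].
Qed.

Lemma equiv_cov_of_same_closed_lifts {X1 X2 Y} (f1 : gmor X1 Y) (f2 : gmor X2 Y) x1 x2 :
  is_covering f1 -> is_covering f2 -> fv f1 x1 = fv f2 x2 ->
  (forall W, closed_walk (fv f1 x1) W -> lifts_closed f1 x1 W <-> lifts_closed f2 x2 W) ->
  equiv_cov f1 f2.
Proof.
  intros C1 C2 E K.
  pose proof (covering_unique_lifting f1 C1) as U1; pose proof (covering_unique_lifting f2 C2) as U2.
  destruct (covering_morphism_exists f1 f2 x1 x2 (proj2 (proj1 C1) x1) U2 E) as [h [Hx [Hv Hd]]].
  { intros W HW; apply K, HW. }
  destruct (covering_morphism_exists f2 f1 x2 x1 (proj2 (proj1 C2) x2) U1 (eq_sym E)) as [k [Kx [Kv Kd]]].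
  { intros W HW; rewrite <- E in HW; apply K, HW. }
  destruct (deck_fixing_point_is_id f1 (gcomp k h) x1 (proj1 C1) U1) as [KHv KHd];
    [intro d; simpl; rewrite Kd; apply Hd | simpl; congruence |].
  destruct (deck_fixing_point_is_id f2 (gcomp h k) x2 (proj1 C2) U2) as [HKv HKd];
    [intro d; simpl; rewrite Hd; apply Kd | simpl; congruence |].
  exists h; split; [exists k; auto | auto].
Qed.

Lemma equiv_cov_sym {X X' Y} (f : gmor X Y) (f' : gmor X' Y) : equiv_cov f f' -> equiv_cov f' f.
Proof.
  intros [h [[k [Hkv [Hhv [Hkd Hhd]]]] [Hv Hd]]]; exists k; split.
  - exists h; auto.
  - split; intro; [rewrite <- Hv, Hhv | rewrite <- Hd, Hhd]; reflexivity.
Qed.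

Lemma equiv_cov_graph_iso {X X' Y} (f : gmor X Y) (f' : gmor X' Y) : equiv_cov f f' -> graph_iso X X'.
Proof. intros [h [Hh _]]; exists h; exact Hh. Qed.

Lemma equiv_cov_postcomp {X X' Y Z} (f : gmor X Y) (f' : gmor X' Y) (g : gmor Y Z) (k : gmor X Z) :
  equiv_cov f f' -> (forall v, fv k v = fv g (fv f v)) -> (forall d, fd k d = fd g (fd f d)) ->
  equiv_cov k (gcomp g f').
Proof.
  intros [h [Hh [Hv Hd]]] Hkv Hkd; exists h; split; [exact Hh|].
  split; intro; simpl; [rewrite Hv, Hkv | rewrite Hd, Hkd]; reflexivity.
Qed.

Theorem lemma4p5 (G Gr Grr Grr_r : graph) (r r' : nat) (hrr : r <= r')
    (pr : gmor Gr G) (prr : gmor Grr G) (q : gmor Gr Grr)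
    (p_rr' : gmor Grr_r Grr) :
  connected G ->
  is_local_covering r pr ->
  is_local_covering r' prr ->
  is_covering q ->
  (forall v, fv pr v = fv prr (fv q v)) ->
  (forall d, fd pr d = fd prr (fd q d)) ->
  is_local_covering r p_rr' ->
  equiv_cov p_rr' q /\ equiv_cov pr (gcomp prr p_rr') /\ graph_iso Grr_r Gr.
Proof.
  intros _ [Cpr [xr0 Chr]] [Cprr [xrr0 Chrr]] Cq Hv Hd [Cp [z Chp]].
  destruct (proj1 (proj2 Cq) (fv p_rr' z)) as [x Hx].
  pose proof (char_subgroup_is_pi1s_move r pr xr0 x Cpr Chr) as Chr_x.
  pose proof (char_subgroup_is_pi1s_move r' prr xrr0 (fv p_rr' z) Cprr Chrr) as Chrr_z.
  assert (Heq : equiv_cov p_rr' q).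
  { apply (equiv_cov_of_same_closed_lifts p_rr' q z x Cp Cq (eq_sym Hx)); intros W HW.
    pose proof (closed_walk_map prr _ _ HW) as HW'; rewrite <- Hx, <- Hv in HW'.
    transitivity (in_pi1s r (fv p_rr' z) W); [exact (Chp W HW)|].
    transitivity (in_pi1s r (fv prr (fv p_rr' z)) (map (fd prr) W)).
    { split; [apply in_pi1s_map|].
      apply (in_pi1s_of_map p_rr' prr r r'); auto using covering_unique_lifting. }
    rewrite <- Hx, <- Hv; transitivity (lifts_closed pr x (map (fd prr) W));
      [symmetry; exact (Chr_x _ HW')|].
    symmetry; apply lifts_closed_comp; [apply covering_unique_lifting, Cprr | exact Hd|].
    rewrite Hx; apply HW. }
  split; [exact Heq | split].
  - exact (equiv_cov_postcomp q p_rr' prr pr (equiv_cov_sym p_rr' q Heq) Hv Hd).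
  - exact (equiv_cov_graph_iso p_rr' q Heq).
Qed.
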